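(* Let $a<b$ and let $X$ be a random variable taking values in $[a,b]$, with probability density function $f:[a,b]\rightarrow[0,1]$ and cumulative distribution function $F(x)=\Pr(X\le x)=\int_a^x f(t)\,dt$. Assume that $F$ is differentiable in $(a,b)$ with $F'=f\in L^1[a,b]$ and that $\gamma\le f(t)\le\Gamma$ for all $t\in[a,b]$, where $\gamma,\Gamma$ are real constants. Then for all $x\in[a,\frac{a+b}{2}]$, \[ \left|\frac{1}{2}[F(x)+F(a+b-x)]-\frac{b-E(X)}{b-a}\right|\leq \left[\frac{b-a}{4}+\left|x-\frac{3a+b}{4}\right|\right] \left(\frac{1}{b-a}-\gamma\right) \] and \[ \left|\frac{1}{2}[F(x)+F(a+b-x)]-\frac{b-E(X)}{b-a}\right|\leq \left[\frac{b-a}{4}+\left|x-\frac{3a+b}{4}\right|\right] \left(\Gamma-\frac{1}{b-a}\right), \] where $E(X)$ is the expectation of $X$. *)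

From HB Require Import structures.
From mathcomp Require Import all_boot all_order all_algebra.
From mathcomp Require Import all_classical all_reals all_analysis.
Set Implicit Arguments. Unset Strict Implicit. Unset Printing Implicit Defensive.
Import Order.TTheory GRing.Theory Num.Theory.
Import numFieldNormedType.Exports.
Local Open Scope classical_set_scope.
Local Open Scope ring_scope.

Definition dens_cdf {R : realType} (f : R -> R) (a x : R) : R :=
  Rintegral (@lebesgue_measure R) `[a, x] f.

Definition dens_expectation {R : realType} (f : R -> R) (a b : R) : R :=
  Rintegral (@lebesgue_measure R) `[a, b] (fun t => t * f t).

From HB Require Import structures.
From mathcomp Require Import all_boot all_order all_algebra.
From mathcomp Require Import all_classical all_reals all_analysis.
From mathcomp Require Import ring lra measurable_realfun.
Import Order.TTheory GRing.Theory Num.Theory.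
Import numFieldNormedType.Exports.
Local Open Scope classical_set_scope.
Local Open Scope ring_scope.

(* With y = a + b - x, the quantity inside the absolute value is the integral
   of K f over [a, b] for the kernel
     K t = (1_[a,x] t + 1_[a,y] t) / 2 - (b - t) / (b - a),
   because the indicators turn the integral into (F x + F y) / 2 and the last
   term gives (b - E X) / (b - a) as the integral of f is 1.  The kernel has
   mean zero, so f may be replaced by f - gamma >= 0 (resp. Gamma - f >= 0),
   and then |int K f| <= sup |K| * int (f - gamma) = sup |K| (1 - gamma (b - a)).
   Finally sup |K| = max (x - a, (a + b) / 2 - x) / (b - a), which is
   ((b - a) / 4 + |x - (3a + b) / 4|) / (b - a). *)

Section Rintegrable.
Context {d} {T : measurableType d} {R : realType}.
Context {mu : {measure set T -> \bar R}} {D : set T}.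
Hypothesis mD : measurable D.
Local Notation integrable f := (mu.-integrable D (EFin \o f)).

Lemma bounded_normr_le (g : T -> R) (M : R) :
  (forall t, D t -> `|g t| <= M) -> [bounded g t | t in D].
Proof.
move=> gM; exists M; split; first exact: num_real.
by move=> N /ltW MN t Dt; exact: le_trans (gM t Dt) MN.
Qed.

Lemma integrable_bounded (g : T -> R) (M : R) : (mu D < +oo)%E ->
  measurable_fun D g -> (forall t, D t -> `|g t| <= M) -> integrable g.
Proof.
by move=> Dfin mg gM; apply: measurable_bounded_integrable => //;
  exact: (bounded_normr_le _ _ gM).
Qed.

Lemma integrableD_EFin (f g : T -> R) :
  integrable f -> integrable g -> integrable (fun t => f t + g t).
Proof.
move=> intf intg; have := integrableD mD intf intg.
by apply: eq_integrable => // t _ /=; rewrite EFinD.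
Qed.

Lemma integrableB_EFin (f g : T -> R) :
  integrable f -> integrable g -> integrable (fun t => f t - g t).
Proof.
move=> intf intg; have := integrableB mD intf intg.
by apply: eq_integrable => // t _ /=; rewrite EFinB.
Qed.

Lemma integrableZl_EFin (k : R) (f : T -> R) :
  integrable f -> integrable (fun t => k * f t).
Proof.
move=> intf; have := integrableZl mD k intf.
by apply: eq_integrable => // t _ /=; rewrite EFinM.
Qed.

Lemma integrableMl_bounded (g f : T -> R) (M : R) :
  measurable_fun D g -> (forall t, D t -> `|g t| <= M) ->
  integrable f -> integrable (fun t => g t * f t).
Proof.
move=> mg gM intf; have := integrableMr mD mg (bounded_normr_le _ _ gM) intf.
by apply: eq_integrable => // t _ /=; rewrite EFinM.
Qed.

Lemma normr_RintegralM_le (g h : T -> R) (M : R) :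
  measurable_fun D g -> (forall t, D t -> `|g t| <= M) ->
  integrable h -> (forall t, D t -> 0 <= h t) ->
  `|\int[mu]_(t in D) (g t * h t)| <= M * \int[mu]_(t in D) h t.
Proof.
move=> mg gM inth h0; have intgh := integrableMl_bounded _ _ _ mg gM inth.
rewrite -RintegralZl //; apply: le_trans (le_normr_Rintegral mD intgh) _.
apply: le_Rintegral => //; first exact: integrable_norm.
  exact: integrableZl_EFin.
move=> t Dt /=; rewrite normrM (ger0_norm (h0 t Dt)).
by apply: ler_wpM2r; [exact: h0 | exact: gM].
Qed.

Lemma RintegralM_shift_mean0 (g f : T -> R) (M c : R) :
  measurable_fun D g -> (forall t, D t -> `|g t| <= M) ->
  integrable g -> integrable f -> \int[mu]_(t in D) g t = 0 ->
  \int[mu]_(t in D) (g t * (f t - c)) = \int[mu]_(t in D) (g t * f t).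
Proof.
move=> mg gM intg intf g0.
transitivity (\int[mu]_(t in D) (g t * f t - c * g t)).
  by apply: eq_Rintegral => t _; ring.
rewrite RintegralB //; last exact: integrableZl_EFin.
  by rewrite RintegralZl // g0 mulr0 subr0.
exact: integrableMl_bounded mg gM intf.
Qed.

Section mean_zero_kernel.
Context {g f : T -> R} {M : R}.
Hypotheses (Dfin : (mu D < +oo)%E) (mg : measurable_fun D g).
Hypotheses (gM : forall t, D t -> `|g t| <= M).
Hypotheses (g0 : \int[mu]_(t in D) g t = 0) (intf : integrable f).

Lemma normr_RintegralM_mean0_lb (c : R) : (forall t, D t -> c <= f t) ->
  `|\int[mu]_(t in D) (g t * f t)|
    <= M * (\int[mu]_(t in D) f t - c * fine (mu D)).
Proof.
move=> cf; have intc : integrable (cst c).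
  exact: integrable_bounded _ _ Dfin (measurable_cst c) (fun _ _ => lexx `|c|).
rewrite -Rintegral_cst // -RintegralB //.
rewrite -(RintegralM_shift_mean0 _ _ _ c mg gM) //; last first.
  exact: integrable_bounded _ _ Dfin mg gM.
apply: normr_RintegralM_le mg gM _ _; first exact: integrableB_EFin.
by move=> t Dt; rewrite subr_ge0 cf.
Qed.

Lemma normr_RintegralM_mean0_ub (C : R) : (forall t, D t -> f t <= C) ->
  `|\int[mu]_(t in D) (g t * f t)|
    <= M * (C * fine (mu D) - \int[mu]_(t in D) f t).
Proof.
move=> fC; have intC : integrable (cst C).
  exact: integrable_bounded _ _ Dfin (measurable_cst C) (fun _ _ => lexx `|C|).
rewrite -Rintegral_cst // -RintegralB //.
rewrite -(RintegralM_shift_mean0 _ _ _ C mg gM) //; last first.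
  exact: integrable_bounded _ _ Dfin mg gM.
under eq_Rintegral do rewrite -mulrNN opprB.
apply: normr_RintegralM_le (measurable_funN mg) _ _ _.
- by move=> t Dt; rewrite normrN gM.
- exact: integrableB_EFin.
- by move=> t Dt; rewrite subr_ge0 fC.
Qed.

End mean_zero_kernel.

End Rintegrable.

Section lebesgue_itvcc.
Context {R : realType}.
Local Notation mu := (@lebesgue_measure R).

Lemma lebesgue_measure_itvcc (a b : R) : a <= b -> mu `[a, b] = (b - a)%:E.
Proof.
move=> ab; rewrite lebesgue_measure_itv /= lte_fin.
by case: ltgtP ab => //= -> _; rewrite subrr.
Qed.

Lemma Rintegral_cst_itvcc (a b c : R) : a <= b ->
  \int[mu]_(_ in `[a, b]) c = c * (b - a).
Proof. by move=> ab; rewrite Rintegral_cst //= lebesgue_measure_itvcc. Qed.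

Lemma Rintegral_itvcc_indic (a b c : R) (g : R -> R) : c <= b ->
  \int[mu]_(t in `[a, c]) g t = \int[mu]_(t in `[a, b]) (\1_`[a, c] t * g t).
Proof.
move=> cb; transitivity (\int[mu]_(t in `[a, b] `&` `[a, c]) g t).
  congr Rintegral; apply/seteqP; split => t /=; rewrite !in_itv /=; last by case.
  by move/andP => [-> tc]; rewrite tc (le_trans tc cb).
rewrite Rintegral_mkcondr; apply: eq_Rintegral => t _.
by rewrite patchE indicE; case: (t \in _); rewrite ?mul1r ?mul0r.
Qed.

Lemma Rintegral_indic_itvcc (a b c : R) : a <= c <= b ->
  \int[mu]_(t in `[a, b]) \1_`[a, c] t = c - a.
Proof.
move=> /andP[ac cb]; rewrite -[RHS]mul1r -Rintegral_cst_itvcc //.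
rewrite (Rintegral_itvcc_indic _ _ _ _ cb).
by apply: eq_Rintegral => t _; rewrite mulr1.
Qed.

Lemma Rintegral_id_itvcc (a b : R) : a < b ->
  \int[mu]_(t in `[a, b]) t = (b ^+ 2 - a ^+ 2) / 2.
Proof.
move=> ab; rewrite /Rintegral.
rewrite (@continuous_FTC2 _ (fun t => t) (fun t => t ^+ 2 / 2)) //=.
- by rewrite mulrBl.
- by apply: continuous_subspaceT => t; exact: cvg_id.
- split.
  + by move=> t _; apply: derivableM => //; exact: exprn_derivable.
  + apply: cvg_at_right_filter; apply: cvgM; [exact: exprn_continuous|].
    exact: cvg_cst.
  + apply: cvg_at_left_filter; apply: cvgM; [exact: exprn_continuous|].
    exact: cvg_cst.
- move=> t _; rewrite derive1Mr; last exact: exprn_derivable.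
  by rewrite exp_derive1 /= expr1 -mulr_natl mulrAC divff ?mul1r // pnatr_eq0.
Qed.

End lebesgue_itvcc.

Definition peano_kernel {R : realType} (a b x t : R) : R :=
  2^-1 * (\1_`[a, x] t + \1_`[a, a + b - x] t) - (b - t) / (b - a).

Section peano_kernel.
Context {R : realType} {a b x : R}.
Local Notation mu := (@lebesgue_measure R).
Local Notation peano_kernel := (peano_kernel a b x).

Lemma measurable_peano_kernel : measurable_fun `[a, b] peano_kernel.
Proof.
apply: measurable_funB; apply: measurable_funM => //.
  by apply: measurable_funD; exact: measurable_indic.
by apply: measurable_funB => //; exact: measurable_id.
Qed.

Hypotheses (ab : a < b) (hx : a <= x <= (a + b) / 2).

Lemma peano_kernel_bound t : a <= t <= b ->
  `|peano_kernel t| <= ((b - a) / 4 + `|x - (3 * a + b) / 4|) / (b - a).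
Proof.
move=> /andP[a_t t_b]; have ba : 0 < b - a by rewrite subr_gt0.
have -> : peano_kernel t =
    ((\1_`[a, x] t + \1_`[a, a + b - x] t) * (b - a) / 2 - (b - t)) / (b - a).
  by rewrite /peano_kernel; field; rewrite gt_eqF.
rewrite normf_div (gtr0_norm ba) ler_pM2r ?invr_gt0 //.
have := ler_norm (x - (3 * a + b) / 4).
have := ler_norm (- (x - (3 * a + b) / 4)); rewrite normrN.
case/andP: hx => ax xm; rewrite !indicE !mem_setE !in_itv /= a_t /=.
by case: (lerP t x) => tx; case: (lerP t (a + b - x)) => ty /=;
  rewrite ?mulr1n ?mulr0n ler_norml; move=> *; apply/andP; split; lra.
Qed.

Let mI : measurable `[a, b] := measurable_itv _.
Let ax : a <= x. Proof. by case/andP: hx. Qed.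
Let xb : x <= b. Proof. by case/andP: hx; lra. Qed.
Let ay : a <= a + b - x. Proof. by case/andP: hx; lra. Qed.
Let yb : a + b - x <= b. Proof. by case/andP: hx; lra. Qed.

Let integrable_itvcc (g : R -> R) (M : R) : measurable_fun `[a, b] g ->
  (forall t, a <= t <= b -> `|g t| <= M) ->
  mu.-integrable `[a, b] (EFin \o g).
Proof.
move=> mg gM; apply: integrable_bounded => //.
  by rewrite /= lebesgue_measure_itvcc ?ltry // ltW.
by move=> t; rewrite /= in_itv; exact: gM.
Qed.

Let normr_indic_le1 c t : `|\1_`[a, c] t| <= 1 :> R.
Proof. by rewrite indicE; case: (_ \in _); rewrite ?normr1 ?normr0. Qed.

Let normr_itvcc_le t : a <= t <= b -> `|t| <= `|a| + `|b|.
Proof.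
move=> /andP[a_t t_b]; have := normr_ge0 a; have := normr_ge0 b.
have := ler_norm b; have := ler_norm (- a); rewrite normrN.
by rewrite ler_norml => *; apply/andP; split; lra.
Qed.

Let integrable_indic c : mu.-integrable `[a, b] (EFin \o \1_`[a, c]).
Proof. by apply: (integrable_itvcc _ 1) => //; exact: measurable_indic. Qed.

Let integrable_id : mu.-integrable `[a, b] (EFin \o id).
Proof.
by apply: (integrable_itvcc _ _ _ normr_itvcc_le); exact: measurable_id.
Qed.

Let integrable_cst c : mu.-integrable `[a, b] (EFin \o cst c).
Proof. exact: (integrable_itvcc _ `|c|). Qed.

Lemma Rintegral_peano_kernel : \int[mu]_(t in `[a, b]) peano_kernel t = 0.
Proof.
have intI : mu.-integrable `[a, b]
    (EFin \o (fun t => \1_`[a, x] t + \1_`[a, a + b - x] t)).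
  exact: integrableD_EFin.
have intL : mu.-integrable `[a, b] (EFin \o (fun t => b - t)).
  by apply: integrableB_EFin => //; exact: integrable_cst.
transitivity (\int[mu]_(t in `[a, b])
    (2^-1 * (\1_`[a, x] t + \1_`[a, a + b - x] t) - (b - a)^-1 * (b - t))).
  by apply: eq_Rintegral => t _; rewrite /peano_kernel [_ / _]mulrC.
rewrite RintegralB //; [|by apply: integrableZl_EFin..].
rewrite !RintegralZl // RintegralB //; last exact: integrable_cst.
rewrite (@RintegralD _ _ _ mu _ _ _ mI (integrable_indic x) (integrable_indic _)).
rewrite (Rintegral_indic_itvcc a b x) ?ax ?xb //.
rewrite (Rintegral_indic_itvcc a b (a + b - x)) ?ay ?yb //.
rewrite Rintegral_cst_itvcc ?ltW // Rintegral_id_itvcc //.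
by field; rewrite gt_eqF ?subr_gt0.
Qed.

Lemma Rintegral_peano_kernelM (f : R -> R) :
  mu.-integrable `[a, b] (EFin \o f) -> \int[mu]_(t in `[a, b]) f t = 1 ->
  \int[mu]_(t in `[a, b]) (peano_kernel t * f t) =
    (dens_cdf f a x + dens_cdf f a (a + b - x)) / 2
    - (b - dens_expectation f a b) / (b - a).
Proof.
move=> intf f1.
have intIf c : mu.-integrable `[a, b] (EFin \o (fun t => \1_`[a, c] t * f t)).
  by apply: integrableMl_bounded.
have inttf : mu.-integrable `[a, b] (EFin \o (fun t => t * f t)).
  apply: integrableMl_bounded => //.
  by move=> t; rewrite /= in_itv; exact: normr_itvcc_le.
have intbf : mu.-integrable `[a, b] (EFin \o (fun t => b * f t)).
  exact: integrableZl_EFin.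
transitivity (\int[mu]_(t in `[a, b])
    (2^-1 * (\1_`[a, x] t * f t + \1_`[a, a + b - x] t * f t)
     - (b - a)^-1 * (b * f t - t * f t))).
  apply: eq_Rintegral => t _; rewrite /peano_kernel.
  by field; rewrite gt_eqF ?subr_gt0.
have intS : mu.-integrable `[a, b]
    (EFin \o (fun t => \1_`[a, x] t * f t + \1_`[a, a + b - x] t * f t)).
  exact: integrableD_EFin.
have intT : mu.-integrable `[a, b] (EFin \o (fun t => b * f t - t * f t)).
  exact: integrableB_EFin.
rewrite RintegralB //; [|by apply: integrableZl_EFin..].
rewrite !RintegralZl // RintegralB //.
rewrite (@RintegralD _ _ _ mu _ _ _ mI (intIf x) (intIf _)).
rewrite RintegralZl // f1 /dens_cdf /dens_expectation.
rewrite -(Rintegral_itvcc_indic _ _ _ _ xb) -(Rintegral_itvcc_indic _ _ _ _ yb).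
by field; rewrite gt_eqF ?subr_gt0.
Qed.

End peano_kernel.

Theorem theorem4p1 (R : realType) (a b gamma Gamma : R) (f : R -> R)
  (hab : a < b)
  (hf01 : forall t, a <= t <= b -> 0 <= f t <= 1)
  (hfint : (@lebesgue_measure R).-integrable `[a, b] (EFin \o f))
  (hdens : Rintegral (@lebesgue_measure R) `[a, b] f = 1)
  (hderiv : forall x, a < x < b -> is_derive x 1 (dens_cdf f a) (f x))
  (hbounds : forall t, a <= t <= b -> gamma <= f t <= Gamma) :
  forall x, a <= x <= (a + b) / 2 ->
    `| (dens_cdf f a x + dens_cdf f a (a + b - x)) / 2
       - (b - dens_expectation f a b) / (b - a) |
      <= ((b - a) / 4 + `| x - (3 * a + b) / 4 |) * ((b - a)^-1 - gamma)
    /\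
    `| (dens_cdf f a x + dens_cdf f a (a + b - x)) / 2
       - (b - dens_expectation f a b) / (b - a) |
      <= ((b - a) / 4 + `| x - (3 * a + b) / 4 |) * (Gamma - (b - a)^-1).
Proof.
move=> x hx; set B := (b - a) / 4 + _.
rewrite -(Rintegral_peano_kernelM hab hx _ hfint hdens).
have mu_ab : (@lebesgue_measure R) `[a, b] = (b - a)%:E.
  exact: lebesgue_measure_itvcc (ltW hab).
have fin_ab : ((@lebesgue_measure R) `[a, b] < +oo)%E by rewrite mu_ab ltry.
have K_bound t : `[a, b]%classic t -> `|peano_kernel a b x t| <= B / (b - a).
  by rewrite /= in_itv; exact: peano_kernel_bound.
have K_mean0 := Rintegral_peano_kernel hab hx.
have f_bounds t : `[a, b]%classic t -> gamma <= f t <= Gamma.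
  by rewrite /= in_itv; exact: hbounds.
have ba : b - a != 0 by rewrite subr_eq0 gt_eqF.
have -> : B * ((b - a)^-1 - gamma) = B / (b - a) * (1 - gamma * (b - a)).
  by field.
have -> : B * (Gamma - (b - a)^-1) = B / (b - a) * (Gamma * (b - a) - 1).
  by field.
split.
- apply: le_trans (normr_RintegralM_mean0_lb _ fin_ab measurable_peano_kernel
    K_bound K_mean0 hfint gamma _) _.
  + exact: measurable_itv.
  + by move=> t Dt; case/andP: (f_bounds t Dt).
  + by rewrite hdens /= mu_ab.
- apply: le_trans (normr_RintegralM_mean0_ub _ fin_ab measurable_peano_kernel
    K_bound K_mean0 hfint Gamma _) _.
  + exact: measurable_itv.
  + by move=> t Dt; case/andP: (f_bounds t Dt).
  + by rewrite hdens /= mu_ab.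
Qed.
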